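(* (i) Let $I$ be any instance with $n$ agents and goods partitioned into categories $C_1,\dots,C_h$ with $m_j=|C_j|$ and cardinality constraints $\kappa=(k_1,\dots,k_h)$, $k_j\ge m_j/n$, ordered so that $\frac{k_1}{m_1}\le\dots\le\frac{k_h}{m_h}$, and with $k_1\le m_1$. Then $$\frac{\text{OPT-USW}(I)}{\max_{\mathcal{A}\in \mathcal{C}_\kappa(I)}\text{USW}(\mathcal{A})}\le\frac{m_1}{k_1}.$$ (ii) For all positive integers $n,k,q$ with $k\mid q$ and $q\le kn$, there is an instance with $n$ agents and $h=n$ categories, each with $m_j=q$ goods and constraint $k_j=k$, for which this ratio equals $\frac{q}{k}=\frac{m_1}{k_1}$.
   Context: Each agent $i$ has an additive utility function $u_i:2^M\to\mathbb{R}_{\ge 0}$ with $u_i(\emptyset)=0$ and $u_i(M)=1$, where $M=C_1\cup\dots\cup C_h$ is the set of goods. An allocation $(A_1,\dots,A_n)$ is a partition of $M$; it is cardinal if $|A_i\cap C_j|\le k_j$ for all $i,j$; $\mathcal{C}_\kappa(I)$ is the set of cardinal allocations. $\text{USW}(\mathcal{A})=\sum_i u_i(A_i)$ and $\text{OPT-USW}(I)$ is its maximum over all allocations. *)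

From HB Require Import structures.
From mathcomp Require Import all_boot all_order all_algebra.
Set Implicit Arguments. Unset Strict Implicit. Unset Printing Implicit Defensive.
Import Order.TTheory GRing.Theory Num.Theory.
Local Open Scope ring_scope.

(* An instance: agents 'I_n, goods a finite type G, categories 'I_h given by
   cat : G -> 'I_h (so C_j = [set g | cat g == j]), additive utilities given
   by the per-good values u i g (u_i(S) = \sum_(g in S) u i g).
   An allocation (partition of M into A_1..A_n) is a function A : G -> 'I_n
   (A_i = [set g | A g == i]). *)

Definition bundle_util (R : numDomainType) (n : nat) (G : finType)
  (u : 'I_n -> G -> R) (i : 'I_n) (S : {set G}) : R :=
  \sum_(g in S) u i g.

Definition bundle (n : nat) (G : finType) (A : {ffun G -> 'I_n}) (i : 'I_n)
  : {set G} := [set g | A g == i].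

Definition category (h : nat) (G : finType) (cat : G -> 'I_h) (j : 'I_h)
  : {set G} := [set g | cat g == j].

Definition normalized_utils (R : numDomainType) (n : nat) (G : finType)
  (u : 'I_n -> G -> R) : Prop :=
  (forall i g, 0 <= u i g) /\ (forall i, bundle_util u i [set: G] = 1).

Definition USW (R : numDomainType) (n : nat) (G : finType)
  (u : 'I_n -> G -> R) (A : {ffun G -> 'I_n}) : R :=
  \sum_(i < n) bundle_util u i (bundle A i).

Definition cardinal (n h : nat) (G : finType) (cat : G -> 'I_h)
  (k : 'I_h -> nat) (A : {ffun G -> 'I_n}) : bool :=
  [forall i : 'I_n, forall j : 'I_h,
     #|bundle A i :&: category cat j| <= k j]%N.

(* USW >= 0 for nonnegative utilities, so 0 is a harmless seed for the max *)
Definition OPT_USW (R : realDomainType) (n : nat) (G : finType)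
  (u : 'I_n -> G -> R) : R :=
  \big[Num.max/0]_(A : {ffun G -> 'I_n}) USW u A.

Definition max_card_USW (R : realDomainType) (n h : nat) (G : finType)
  (cat : G -> 'I_h) (k : 'I_h -> nat) (u : 'I_n -> G -> R) : R :=
  \big[Num.max/0]_(A : {ffun G -> 'I_n} | cardinal cat k A) USW u A.

(* (i) Let B be a welfare-maximal cardinal allocation and g a good of category
   C_j.  Moving g to an agent i whose share B_i ∩ C_j is not full cannot help,
   so u_i(g) <= u_{B(g)}(g); if that share is full, swapping g with each of its
   k_j goods cannot help, so k_j u_i(g) <= k_j u_{B(g)}(g) + u_i(B_i ∩ C_j).
   Summing over the goods of C_j, each full share is charged by at most
   m_j - k_j goods outside it, hence any allocation collects on C_j at most
   max(k_j, m_j) / k_j times what B collects there, and the ordering of the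
   ratios k_j / m_j together with k_1 <= m_1 bounds this factor by m_1 / k_1.
   (ii) With q goods per category, each worth 1/q to the agent of the same
   index and 0 to everyone else, the optimum is n whereas a cardinal
   allocation gets at most n k / q; part (i) shows that this is attained. *)

From HB Require Import structures.
From mathcomp Require Import all_boot all_order all_algebra perm.
From mathcomp Require Import ring lra.
Set Implicit Arguments. Unset Strict Implicit. Unset Printing Implicit Defensive.
Import Order.TTheory GRing.Theory Num.Theory.
Local Open Scope ring_scope.

Section Welfare.
Variables (R : numDomainType) (n h : nat) (G : finType).
Variables (cat : G -> 'I_h) (u : 'I_n -> G -> R).
Implicit Types (A : {ffun G -> 'I_n}) (P : pred G).

Definition welfare A : R := \sum_g u (A g) g.

Definition cat_welfare A (j : 'I_h) : R := \sum_(g | cat g == j) u (A g) g.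

Lemma sum_bundles A P :
  \sum_(i < n) \sum_(g | (A g == i) && P g) u i g = \sum_(g | P g) u (A g) g.
Proof.
rewrite (partition_big A xpredT) //=; apply: eq_bigr => i _.
rewrite [RHS](eq_bigl (fun g => (A g == i) && P g)) => [|g]; last by rewrite andbC.
by apply: eq_bigr => g /andP[/eqP -> _].
Qed.

Lemma USW_welfare A : USW u A = welfare A.
Proof.
rewrite /USW /welfare -(sum_bundles A xpredT); apply: eq_bigr => i _.
by apply: eq_bigl => g; rewrite !inE andbT.
Qed.

Lemma cat_welfare_bundles A j :
  cat_welfare A j = \sum_(i < n) bundle_util u i (bundle A i :&: category cat j).
Proof.
rewrite /cat_welfare -sum_bundles; apply: eq_bigr => i _.
by apply: eq_bigl => g; rewrite !inE.
Qed.

Lemma welfare_by_category A : welfare A = \sum_(j < h) cat_welfare A j.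
Proof. exact: (partition_big cat xpredT). Qed.

Definition reassign A g (i : 'I_n) : {ffun G -> 'I_n} :=
  [ffun x => if x == g then i else A x].

Definition swap_goods A (g g' : G) : {ffun G -> 'I_n} :=
  [ffun x => A (tperm g g' x)].

Lemma welfare_reassign A g i :
  welfare (reassign A g i) = welfare A + (u i g - u (A g) g).
Proof.
rewrite /welfare (bigD1 g) //= [in RHS](bigD1 g) //= ffunE eqxx.
rewrite (eq_bigr (fun x => u (A x) x)) => [|x /negbTE xg]; last by rewrite ffunE xg.
ring.
Qed.

Lemma welfare_swap_goods A g g' : g != g' ->
  welfare (swap_goods A g g') =
    welfare A + (u (A g') g + u (A g) g' - u (A g) g - u (A g') g').
Proof.
move=> gg'; rewrite /welfare (bigD1 g) //= (bigD1 g') 1?eq_sym //=.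
rewrite [in RHS](bigD1 g) //= [in RHS](bigD1 g') 1?eq_sym //=.
rewrite !ffunE tpermL tpermR.
rewrite (eq_bigr (fun x => u (A x) x)) => [|x /andP[xg xg']]; last first.
  by rewrite ffunE tpermD // eq_sym.
ring.
Qed.

End Welfare.

Section Cardinality.
Variables (n h : nat) (G : finType) (cat : G -> 'I_h) (k : 'I_h -> nat).
Implicit Types (A : {ffun G -> 'I_n}).

Lemma cardinalP A :
  reflect (forall i j, #|bundle A i :&: category cat j| <= k j)%N
          (cardinal cat k A).
Proof.
apply: (iffP forallP) => [cardA i j | cardA i]; last by apply/forallP.
exact: (forallP (cardA i)).
Qed.

Lemma cardinal_reassign A g i : cardinal cat k A ->
  (#|bundle A i :&: category cat (cat g)| < k (cat g))%N ->
  cardinal cat k (reassign A g i).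
Proof.
move=> /cardinalP cardA room; apply/cardinalP => a b.
have [[-> ->] | ab] := altP (pair_eqP (a, b) (i, cat g)).
  apply: leq_trans room; set S := bundle A i :&: _.
  apply: (@leq_trans #|g |: S|); last by rewrite cardsU1; case: (_ \notin _).
  apply/subset_leq_card/subsetP => x; rewrite !inE ffunE.
  by case: (x =P g).
apply: leq_trans (cardA a b); apply/subset_leq_card/subsetP => x.
rewrite !inE ffunE; case: (x =P g) => [-> /andP[/eqP ia /eqP gb] | _ //].
by move: ab; rewrite ia gb /= !eqxx.
Qed.

Lemma cardinal_swap_goods A g g' : cardinal cat k A -> cat g = cat g' ->
  cardinal cat k (swap_goods A g g').
Proof.
move=> /cardinalP cardA cgg'; apply/cardinalP => a b.
suff -> : bundle (swap_goods A g g') a :&: category cat b =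
          tperm g g' @^-1: (bundle A a :&: category cat b).
  by rewrite card_preimset //; apply: perm_inj.
apply/setP => x; rewrite !inE ffunE.
by case: (tpermP g g' x) => [xg | xg | //]; rewrite xg cgg'.
Qed.

Lemma exists_cardinal : (0 < n)%N ->
  (forall j, #|category cat j| <= n * k j)%N ->
  exists A : {ffun G -> 'I_n}, cardinal cat k A.
Proof.
move=> n_gt0 cat_small.
pose rk g := index g (enum (category cat (cat g))).
exists [ffun g => Ordinal (ltn_pmod (rk g) n_gt0)]; apply/cardinalP => a b.
set S := _ :&: _.
rewrite cardE -(size_map (fun g => rk g %/ n)%N) -(size_iota 0 (k b)).
apply: uniq_leq_size => [|x /mapP[g]]; last first.
  rewrite mem_enum !inE => /andP[_ /eqP gb] ->.
  rewrite mem_iota ltn_divLR // mulnC (leq_trans _ (cat_small b)) //.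
  by rewrite /rk gb cardE index_mem mem_enum inE gb.
rewrite map_inj_in_uniq ?enum_uniq // => g1 g2.
rewrite !mem_enum !inE !ffunE => /andP[/eqP a1 /eqP b1] /andP[/eqP a2 /eqP b2] q12.
have : rk g1 = rk g2.
  rewrite (divn_eq (rk g1) n) (divn_eq (rk g2) n) q12.
  by move: a1 a2 => /(congr1 val) /= -> /(congr1 val) /= ->.
have in_cat g : cat g = b -> g \in enum (category cat b) by rewrite mem_enum inE => ->.
rewrite /rk b1 b2 => /(congr1 (nth g1 (enum (category cat b)))).
by rewrite !nth_index ?in_cat.
Qed.

End Cardinality.

Section LocalOptimum.
Variables (R : realDomainType) (n h : nat) (G : finType).
Variables (cat : G -> 'I_h) (k : 'I_h -> nat) (u : 'I_n -> G -> R).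
Variable B : {ffun G -> 'I_n}.
Hypothesis u_ge0 : forall i g, 0 <= u i g.
Hypothesis B_cardinal : cardinal cat k B.
Hypothesis B_opt : forall A, cardinal cat k A -> welfare u A <= welfare u B.

Local Notation share i j := (bundle B i :&: category cat j).

Lemma util_le_of_room g i :
  (#|share i (cat g)| < k (cat g))%N -> u i g <= u (B g) g.
Proof.
move=> room; have := B_opt (cardinal_reassign B_cardinal room).
by rewrite welfare_reassign gerDl subr_le0.
Qed.

Lemma util_le_of_swap g i x :
  x \in share i (cat g) -> u i g <= u (B g) g + u i x.
Proof.
rewrite !inE => /andP[/eqP Bx /eqP cx].
have [-> | gx] := eqVneq g x; first by rewrite Bx lerDr u_ge0.
have := B_opt (cardinal_swap_goods B_cardinal (esym cx)).
rewrite welfare_swap_goods // Bx gerDl => swap_le.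
have := u_ge0 (B g) x; lra.
Qed.

Lemma util_le_of_full g i : #|share i (cat g)| = k (cat g) ->
  (k (cat g))%:R * u i g
    <= (k (cat g))%:R * u (B g) g + bundle_util u i (share i (cat g)).
Proof.
move=> full; rewrite -full !mulr_natl -!sumr_const.
rewrite /bundle_util -big_split /=; apply: ler_sum => x.
exact: util_le_of_swap.
Qed.

Definition swap_credit i g : R :=
  if (g \notin bundle B i) && (#|share i (cat g)| == k (cat g))
  then bundle_util u i (share i (cat g)) else 0.

Lemma util_le_swap_credit g i :
  (k (cat g))%:R * u i g <= (k (cat g))%:R * u (B g) g + swap_credit i g.
Proof.
rewrite /swap_credit inE; have [<- | _] //= := eqVneq (B g) i; first by rewrite addr0.
have [full | not_full] /= := eqVneq #|share i (cat g)| (k (cat g)).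
  exact: util_le_of_full.
rewrite addr0 ler_wpM2l // util_le_of_room // ltn_neqAle not_full.
exact: (cardinalP _ _ _ B_cardinal).
Qed.

Lemma sum_swap_credit i j :
  \sum_(g | cat g == j) swap_credit i g
    <= (#|category cat j| - k j)%:R * bundle_util u i (share i j).
Proof.
set U := bundle_util u i (share i j).
have U_ge0 : 0 <= U by apply: sumr_ge0.
have [full | /negbTE not_full] := eqVneq #|share i j| (k j); last first.
  by rewrite big1 ?mulr_ge0 // => g /eqP cg; rewrite /swap_credit cg not_full andbF.
rewrite (eq_bigr (fun g => if g \notin bundle B i then U else 0)); last first.
  by move=> g /eqP cg; rewrite /swap_credit cg full eqxx andbT.
rewrite -big_mkcondr (eq_bigl [in category cat j :\: bundle B i]); last first.
  by move=> g; rewrite !inE andbC.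
by rewrite sumr_const cardsD setIC full mulr_natl.
Qed.

Lemma cat_welfare_le_local_opt A j :
  (k j)%:R * cat_welfare cat u A j
    <= (maxn (k j) #|category cat j|)%:R * cat_welfare cat u B j.
Proof.
have credit_ge0 i g : 0 <= swap_credit i g.
  by rewrite /swap_credit; case: ifP => // _; apply: sumr_ge0.
rewrite maxnE natrD mulrDl.
apply: (@le_trans _ _ (\sum_(g | cat g == j)
                       ((k j)%:R * u (B g) g + \sum_i swap_credit i g))).
  rewrite mulr_sumr; apply: ler_sum => g /eqP <-.
  apply: le_trans (util_le_swap_credit g (A g)) _.
  by rewrite lerD2l (bigD1 (A g)) //= lerDl sumr_ge0.
rewrite big_split /= -mulr_sumr lerD2l exchange_big /=.
rewrite cat_welfare_bundles mulr_sumr.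
by apply: ler_sum => i _; apply: sum_swap_credit.
Qed.

End LocalOptimum.

Section MaxWelfare.
Variables (R : realDomainType) (n h : nat) (G : finType).
Variables (cat : G -> 'I_h) (k : 'I_h -> nat) (u : 'I_n -> G -> R).

Lemma USW_le_OPT_USW A : USW u A <= OPT_USW u.
Proof. exact: le_bigmax. Qed.

Lemma OPT_USW_le x : 0 <= x -> (forall A, USW u A <= x) -> OPT_USW u <= x.
Proof. by move=> x_ge0 le_x; apply: bigmax_le. Qed.

Lemma USW_le_max_card_USW A : cardinal cat k A -> USW u A <= max_card_USW cat k u.
Proof. exact: le_bigmax_cond. Qed.

Lemma max_card_USW_le x : 0 <= x ->
  (forall A, cardinal cat k A -> USW u A <= x) -> max_card_USW cat k u <= x.
Proof. by move=> x_ge0 le_x; apply: bigmax_le. Qed.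

End MaxWelfare.

Lemma ratio_maxn_le (k0 m0 k m : nat) :
  (k0 <= m0 -> k0 * m <= k * m0 -> k0 * maxn k m <= m0 * k)%N.
Proof.
move=> k0_le km_le; case: (leqP k m) => _; first by rewrite (mulnC m0).
by rewrite leq_mul2r k0_le orbT.
Qed.

Lemma OPT_USW_mul_le (R : realFieldType) (n h : nat) (G : finType)
    (cat : G -> 'I_h.+1) (k : 'I_h.+1 -> nat) (u : 'I_n -> G -> R) :
  normalized_utils u ->
  (forall j, 0 < #|category cat j|)%N ->
  (forall j, #|category cat j| <= n * k j)%N ->
  (forall j1 j2 : 'I_h.+1, (j1 <= j2)%N ->
     (k j1 * #|category cat j2| <= k j2 * #|category cat j1|)%N) ->
  (k ord0 <= #|category cat ord0|)%N ->
  OPT_USW u * (k ord0)%:R <= (#|category cat ord0|)%:R * max_card_USW cat k u.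
Proof.
move=> [u_ge0 _] cat_gt0 cat_small ratio_sorted k0_le.
have nk_gt0 j : (0 < n * k j)%N := leq_trans (cat_gt0 j) (cat_small j).
have n_gt0 : (0 < n)%N by have := nk_gt0 ord0; rewrite muln_gt0 => /andP[].
have k_gt0 j : (0 < k j)%N by have := nk_gt0 j; rewrite muln_gt0 => /andP[].
have [B0 B0_cardinal] := exists_cardinal n_gt0 cat_small.
have [B B_cardinal B_opt] :=
  @arg_maxP _ _ _ B0 (cardinal cat k) (welfare u) B0_cardinal.
set k0 := k ord0; set m0 := #|category cat ord0|.
have k0_gt0 : 0 < k0%:R :> R by rewrite ltr0n k_gt0.
have USW_le A : USW u A * k0%:R <= m0%:R * welfare u B.
  rewrite USW_welfare !(welfare_by_category cat) mulr_suml mulr_sumr.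
  apply: ler_sum => j _; set O := cat_welfare cat u A j; set W := cat_welfare cat u B j.
  have kj_gt0 : 0 < (k j)%:R :> R by rewrite ltr0n k_gt0.
  rewrite -(ler_pM2l kj_gt0) [O * _]mulrC mulrCA.
  apply: (@le_trans _ _ (k0%:R * ((maxn (k j) #|category cat j|)%:R * W))).
    by rewrite ler_wpM2l ?ler0n ?cat_welfare_le_local_opt.
  rewrite !mulrA -!natrM ler_wpM2r ?sumr_ge0 // ler_nat.
  by rewrite (mulnC (k j)); apply: ratio_maxn_le; last exact: ratio_sorted.
have OPT_le : OPT_USW u * k0%:R <= m0%:R * welfare u B.
  rewrite -ler_pdivlMr //; apply: OPT_USW_le => [|A]; last by rewrite ler_pdivlMr.
  by apply: divr_ge0; rewrite ?mulr_ge0 ?ler0n ?sumr_ge0.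
apply: (le_trans OPT_le); rewrite ler_wpM2l //.
by rewrite -USW_welfare USW_le_max_card_USW.
Qed.

Section TightInstance.
Variables (R : realFieldType) (n q : nat).
Implicit Types (i j : 'I_n) (g : 'I_n * 'I_q).

Definition tight_cat g : 'I_n := g.1.

Definition tight_util i g : R := if g.1 == i then q%:R^-1 else 0.

Lemma tight_util_ge0 i g : 0 <= tight_util i g.
Proof. by rewrite /tight_util; case: ifP; rewrite ?invr_ge0 ?ler0n. Qed.

Lemma tight_util_le i g : tight_util i g <= q%:R^-1.
Proof. by rewrite /tight_util; case: ifP; rewrite ?invr_ge0 ?ler0n. Qed.

Lemma card_tight_category j : #|category tight_cat j| = q.
Proof.
have -> : category tight_cat j = setX [set j] [set: 'I_q].
  by apply/setP => -[a b]; rewrite !inE andbT.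
by rewrite cardsX cards1 cardsT card_ord mul1n.
Qed.

Lemma sum_tight_util (S : {set 'I_n * 'I_q}) i :
  bundle_util tight_util i S = q%:R^-1 *+ #|S :&: category tight_cat i|.
Proof.
rewrite /bundle_util -sumr_const big_mkcond [RHS]big_mkcond /=.
by apply: eq_bigr => g _; rewrite !inE /tight_util; case: (g \in S).
Qed.

Lemma max_card_USW_tight_le kk :
  max_card_USW tight_cat (fun _ => kk) tight_util <= (n * kk)%:R / q%:R.
Proof.
apply: max_card_USW_le => [|A /cardinalP cardA].
  by rewrite divr_ge0 ?ler0n.
rewrite /USW (eq_bigr _ (fun i _ => sum_tight_util _ i)).
apply: (@le_trans _ _ (\sum_(i < n) q%:R^-1 *+ kk)).
  by apply: ler_sum => i _; apply: ler_wpMn2l; rewrite ?invr_ge0 ?ler0n ?cardA.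
by rewrite sumr_const card_ord -mulrnA mulnC -[_ *+ (n * kk)]mulr_natr mulrC.
Qed.

Hypothesis q_gt0 : (0 < q)%N.

Lemma tight_util_normalized : normalized_utils tight_util.
Proof.
split=> [|i]; first exact: tight_util_ge0.
rewrite sum_tight_util setTI card_tight_category -[_ *+ q]mulr_natr.
by rewrite mulVf // pnatr_eq0 -lt0n.
Qed.

Lemma OPT_USW_tight : OPT_USW tight_util = n%:R.
Proof.
have total : \sum_(g : 'I_n * 'I_q) q%:R^-1 = n%:R :> R.
  rewrite sumr_const card_prod !card_ord -[_ *+ _]mulr_natr natrM mulrCA.
  by rewrite mulVf ?mulr1 // pnatr_eq0 -lt0n.
apply/le_anti/andP; split.
  apply: OPT_USW_le => [|A]; first exact: ler0n.
  by rewrite USW_welfare -total ler_sum // => g _; apply: tight_util_le.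
have diag_welfare : welfare tight_util [ffun g => g.1] = n%:R.
  by rewrite -total; apply: eq_bigr => g _; rewrite ffunE /tight_util eqxx.
by rewrite -diag_welfare -USW_welfare USW_le_OPT_USW.
Qed.

End TightInstance.

Lemma max_card_USW_tight (R : realFieldType) (n kk q : nat) :
  (0 < n)%N -> (0 < q)%N -> (kk %| q)%N -> (q <= kk * n)%N ->
  max_card_USW (@tight_cat n q) (fun _ => kk) (@tight_util R n q)
    = (n * kk)%:R / q%:R.
Proof.
case: n => // n' _ q_gt0 kk_dvd q_le; apply/le_anti.
rewrite max_card_USW_tight_le /= ler_pdivrMr ?ltr0n // mulrC natrM.
(* The matching lower bound is part (i) applied to this instance. *)
have := @OPT_USW_mul_le R n'.+1 n' _ (@tight_cat n'.+1 q) (fun _ => kk) _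
  (tight_util_normalized R n'.+1 q_gt0).
rewrite OPT_USW_tight // card_tight_category; apply=> [j|j|j1 j2 _|].
- by rewrite card_tight_category.
- by rewrite card_tight_category mulnC.
- by rewrite !card_tight_category.
- exact: dvdn_leq.
Qed.

Theorem theorem4 (R : realFieldType) :
  (* (i) *)
  (forall (n h : nat) (G : finType) (cat : G -> 'I_h.+1)
          (k : 'I_h.+1 -> nat) (u : 'I_n -> G -> R),
     normalized_utils u ->
     (forall j, 0 < #|category cat j|)%N ->
     (forall j, #|category cat j| <= n * k j)%N ->
     (forall j1 j2 : 'I_h.+1, (j1 <= j2)%N ->
        (k j1 * #|category cat j2| <= k j2 * #|category cat j1|)%N) ->
     (k ord0 <= #|category cat ord0|)%N ->
     OPT_USW u * (k ord0)%:R
       <= (#|category cat ord0|)%:R * max_card_USW cat k u)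
  /\
  (* (ii) *)
  (forall n kk q : nat, (0 < n)%N -> (0 < kk)%N -> (0 < q)%N ->
     (kk %| q)%N -> (q <= kk * n)%N ->
     exists (G : finType) (cat : G -> 'I_n) (u : 'I_n -> G -> R),
       normalized_utils u /\
       (forall j, #|category cat j| = q) /\
       0 < max_card_USW cat (fun _ => kk) u /\
       OPT_USW u / max_card_USW cat (fun _ => kk) u = q%:R / kk%:R).
Proof.
split=> [n h G cat k u | n kk q n_gt0 kk_gt0 q_gt0 kk_dvd q_le].
  exact: OPT_USW_mul_le.
exists ('I_n * 'I_q)%type, (@tight_cat n q), (@tight_util R n q).
split; first exact: tight_util_normalized.
split; first exact: card_tight_category.
rewrite max_card_USW_tight // OPT_USW_tight // natrM.
have [n0 kk0 q0] : [/\ n%:R != 0 :> R, kk%:R != 0 :> R & q%:R != 0 :> R].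
  by split; rewrite pnatr_eq0 -lt0n.
split; first by rewrite !(mulr_gt0, invr_gt0, ltr0n).
by field; rewrite n0 kk0 q0.
Qed.
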